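(* Let $f:\mathbb{N}\to\mathbb{R}$ with $f(1)=1$. Assume there exist $C>0$ and $\gamma\in\mathbb{R}$ such that $|f(n)|\leq Cn^\gamma$ for all $n\geq2$. Then $$|f^{-1}(n)|\leq n^{\gamma+\varsigma}, \quad n\geq2,$$ where $\varsigma>1$ is the unique real root of $\zeta(s)=\frac{1}{C}+1$.
   Context: $f^{-1}$ denotes the Dirichlet inverse of $f$: the arithmetic function with $\sum_{d\mid n} f(n/d) f^{-1}(d)=\varepsilon(n)$ for all $n$, where $\varepsilon(1)=1$ and $\varepsilon(n)=0$ for $n\ge2$. $\zeta$ is the Riemann zeta function. *)

From mathcomp Require Import all_boot all_order all_algebra.
From mathcomp Require Import all_classical all_reals all_analysis.
Set Implicit Arguments. Unset Strict Implicit. Unset Printing Implicit Defensive.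
Import Order.TTheory GRing.Theory Num.Theory.
Local Open Scope ring_scope.

(* Dirichlet convolution on arithmetic functions (values at n >= 1 matter). *)
Definition dirichlet_conv (R : pzRingType) (f g : nat -> R) (n : nat) : R :=
  \sum_(d <- divisors n) f (n %/ d)%N * g d.

Definition is_dirichlet_inverse (R : pzRingType) (f g : nat -> R) : Prop :=
  forall n : nat, (0 < n)%N -> dirichlet_conv f g n = (n == 1)%:R.

Definition zeta (R : realType) (s : R) : R :=
  limn (fun N : nat => \sum_(1 <= k < N) ((k%:R : R) `^ (- s))).

From mathcomp Require Import all_boot all_order all_algebra.
From mathcomp Require Import all_classical all_reals all_analysis.
From mathcomp Require Import lra.
Import Order.TTheory GRing.Theory Num.Theory.

(** Strong induction on [n], using the recursion
    [g n = - \sum_(d | n, d < n) f (n / d) g d] for the Dirichlet inverse [g].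
    The bound on [f] and the induction hypothesis give
    [|f (n/d) g d| <= C n^(gamma + s) (n/d)^(-s)], and as [n/d] runs over the
    divisors [e > 1] of [n], [\sum_e e^(-s) <= zeta s - 1 = 1/C].  The partial
    sums of [zeta s] are bounded, hence below their limit, by Cauchy
    condensation: the terms with [2^m <= k < 2^(m+1)] add up to at most
    [2^((1 - s) m)]. *)

Set Implicit Arguments.
Unset Strict Implicit.
Unset Printing Implicit Defensive.

Local Open Scope ring_scope.

Lemma divisorsE n : (0 < n)%N ->
  divisors n = [seq d <- index_iota 1 n.+1 | (d %| n)%N].
Proof.
move=> n_gt0; apply: (irr_sorted_eq ltn_trans ltnn).
- exact: sorted_divisors_ltn.
- by apply: sorted_filter; [exact: ltn_trans | exact: iota_ltn_sorted].
move=> d; rewrite mem_filter mem_index_iota -dvdn_divisors //.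
apply/idP/andP => [d_dvd | [//]]; split=> //.
by rewrite (dvdn_gt0 n_gt0 d_dvd) ltnS dvdn_leq.
Qed.

Lemma perm_divisors_div n : (0 < n)%N ->
  perm_eq [seq (n %/ d)%N | d <- divisors n] (divisors n).
Proof.
move=> n_gt0; have div_div d : (d %| n)%N -> (n %/ (n %/ d))%N = d.
  by move=> d_dvd; rewrite divnA // mulKn.
apply: uniq_perm; rewrite ?divisors_uniq //.
  rewrite map_inj_in_uniq ?divisors_uniq // => a b.
  by rewrite -!dvdn_divisors // => /div_div {2}<- /div_div {2}<- ->.
move=> e; apply/mapP/idP => [[d] | e_div].
  by rewrite -!dvdn_divisors // => d_dvd ->; exact: dvdn_div.
rewrite -dvdn_divisors // in e_div.
by exists (n %/ e)%N; rewrite ?div_div // -dvdn_divisors // dvdn_div.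
Qed.

Lemma big_divisors_div (R : Type) (idx : R) (op : Monoid.com_law idx)
    n (P : pred nat) (F : nat -> R) : (0 < n)%N ->
  \big[op/idx]_(d <- divisors n | P (n %/ d)%N) F (n %/ d)%N
  = \big[op/idx]_(d <- divisors n | P d) F d.
Proof. by move=> n_gt0; rewrite -[RHS](perm_big _ (perm_divisors_div n_gt0)) big_map. Qed.

Lemma sum_divisors_neq1_le (R : numDomainType) n (F : nat -> R) : (0 < n)%N ->
  (forall k, 0 <= F k) ->
  \sum_(d <- divisors n | d != 1%N) F d <= \sum_(2 <= k < n.+1) F k.
Proof.
move=> n_gt0 F_ge0; rewrite divisorsE // big_filter_cond big_ltn_cond //= andbF.
by rewrite big_mkcond; apply: ler_sum => d _; case: ifP.
Qed.

Lemma sum_dyadic_blocks (V : nmodType) (F : nat -> V) M :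
  \sum_(1 <= k < 2 ^ M) F k = \sum_(m < M) \sum_(2 ^ m <= k < 2 ^ m.+1) F k.
Proof.
elim: M => [|M IH]; first by rewrite big_geq // big_ord0.
rewrite big_ord_recr /= -IH (@big_cat_nat _ _ _ (2 ^ M)) //.
  by rewrite expn_gt0.
by rewrite leq_exp2l.
Qed.

Section DirichletInverse.
Variables (R : pzRingType) (f g : nat -> R).
Hypotheses (f1 : f 1%N = 1) (fg : is_dirichlet_inverse f g).

Lemma dirichlet_inverse1 : g 1%N = 1.
Proof.
have := fg (isT : (0 < 1)%N).
by rewrite /dirichlet_conv (_ : divisors 1 = [:: 1%N]) // big_seq1 f1 mul1r.
Qed.

Lemma dirichlet_inverse_rec n : (1 < n)%N ->
  g n = - \sum_(d <- divisors n | d != n) f (n %/ d)%N * g d.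
Proof.
move=> n_gt1; have n_gt0 := ltnW n_gt1.
move: (fg n_gt0); rewrite /dirichlet_conv gtn_eqF //.
rewrite (bigD1_seq n) ?divisors_id ?divisors_uniq //= divnn n_gt0 f1 mul1r.
by move/eqP; rewrite addr_eq0 => /eqP.
Qed.

End DirichletInverse.

Section ZetaPartialSums.
Variables (R : realType) (s : R).
Hypothesis s_gt1 : 1 < s.

Let v (k : nat) : R := k%:R `^ (- s).
Let r : R := 2 `^ (1 - s).

Let r_gt0 : 0 < r. Proof. by rewrite powR_gt0. Qed.

Let r_lt1 : r < 1.
Proof.
by rewrite /r /powR pnatr_eq0 /= expR_lt1 pmulr_llt0 ?ln_gt0 ?ltr1n ?subr_lt0.
Qed.

Let v_le m k : (0 < m)%N -> (m <= k)%N -> v k <= v m.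
Proof.
move=> m_gt0 le_mk; rewrite /v !powRN lef_pV2 ?posrE ?powR_gt0 ?ltr0n //; last first.
  exact: leq_trans le_mk.
apply: ge0_ler_powR; rewrite ?nnegrE ?ler0n ?ler_nat //.
exact: ltW (lt_trans ltr01 s_gt1).
Qed.

Let dyadic_block_le m : \sum_(2 ^ m <= k < 2 ^ m.+1) v k <= r ^+ m.
Proof.
have pow2_gt0 : (0 < 2 ^ m)%N by rewrite expn_gt0.
apply: le_trans (_ : \sum_(2 ^ m <= k < 2 ^ m.+1) v (2 ^ m) <= _).
  rewrite big_nat_cond [leRHS]big_nat_cond.
  by apply: ler_sum => k /andP[/andP[le_k _] _]; apply: v_le.
rewrite sumr_const_nat expnS mul2n -addnn addnK -mulr_natl /v natrX.
rewrite -[X in X * _]powRr1 ?exprn_ge0 // -powRD; last first.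
  by rewrite expf_eq0 pnatr_eq0 andbF implybT.
by rewrite -powR_mulrn // -powRrM /r -powR_mulrn ?powR_ge0 // -powRrM mulrC.
Qed.

Let partial_sum_pow2_le M : \sum_(1 <= k < 2 ^ M) v k <= (1 - r)^-1.
Proof.
have r_norm_lt1 : `|r| < 1 by rewrite gtr0_norm ?r_gt0 ?r_lt1.
rewrite sum_dyadic_blocks -[leRHS]mul1r.
apply: le_trans (geometric_le_lim M ler01 r_gt0 r_norm_lt1).
rewrite /series /= big_mkord; apply: ler_sum => m _.
by rewrite /geometric /= mul1r dyadic_block_le.
Qed.

Let S (N : nat) : R := \sum_(1 <= k < N) v k.

Let S_nondecreasing : nondecreasing_seq S.
Proof.
apply/nondecreasing_seqP => N; rewrite /S.
case: N => [|N]; first by rewrite !big_geq.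
by rewrite [leRHS]big_nat_recr //= lerDl powR_ge0.
Qed.

Let S_le N : S N <= (1 - r)^-1.
Proof.
apply: le_trans (partial_sum_pow2_le N).
by apply: S_nondecreasing; exact: ltnW (ltn_expl N (ltnSn 1)).
Qed.

Lemma sum_powRN_le_zeta N : \sum_(1 <= k < N) k%:R `^ (- s) <= zeta s.
Proof.
apply: (nondecreasing_cvgn_le S_nondecreasing).
apply: nondecreasing_is_cvgn; first exact: S_nondecreasing.
by exists (1 - r)^-1 => _ [M _ <-]; exact: S_le.
Qed.

End ZetaPartialSums.

Section DirichletInverseBound.
Variables (R : realType) (f g : nat -> R) (C gamma s : R).
Hypotheses (f1 : f 1%N = 1) (C_gt0 : 0 < C).
Hypothesis f_bound : forall n, (2 <= n)%N -> `|f n| <= C * n%:R `^ gamma.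
Hypothesis fg : is_dirichlet_inverse f g.
Hypothesis sum_bound : forall N, \sum_(1 <= k < N) k%:R `^ (- s) <= C^-1 + 1.

Let sum_proper_divisors_le n : (0 < n)%N ->
  \sum_(d <- divisors n | d != n) (n %/ d)%N%:R `^ (- s) <= C^-1.
Proof.
move=> n_gt0.
have -> : \sum_(d <- divisors n | d != n) (n %/ d)%N%:R `^ (- s)
        = \sum_(d <- divisors n | (n %/ d)%N != 1%N) (n %/ d)%N%:R `^ (- s).
  rewrite big_seq_cond [RHS]big_seq_cond; apply: eq_bigl => d.
  case d_div : (d \in divisors n) => //=; rewrite -dvdn_divisors // in d_div.
  congr negb; apply/eqP/eqP => [->|q1]; first by rewrite divnn n_gt0.
  by rewrite -(divnK d_div) q1 mul1n.
rewrite (big_divisors_div _ (fun e => e != 1%N) (fun e => e%:R `^ (- s)) n_gt0).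
apply: le_trans (sum_divisors_neq1_le n_gt0 (fun k => powR_ge0 _ _)) _.
by have := sum_bound n.+1; rewrite big_ltn // powR1; lra.
Qed.

Let term_le n d : (d %| n)%N -> (d < n)%N -> `|g d| <= d%:R `^ (gamma + s) ->
  `|f (n %/ d)%N * g d| <= C * n%:R `^ (gamma + s) * (n %/ d)%N%:R `^ (- s).
Proof.
move=> d_div d_lt_n g_d.
have q_ge2 : (2 <= n %/ d)%N by rewrite ltn_divRL // mul1n.
rewrite normrM.
apply: le_trans (ler_pM (normr_ge0 _) (normr_ge0 _) (f_bound q_ge2) g_d) _.
set q := (n %/ d)%N; have -> : n = (q * d)%N by rewrite divnK.
have q_pow : q%:R `^ gamma = q%:R `^ (gamma + s) * q%:R `^ (- s) :> R.
  by rewrite -powRD ?addrK // pnatr_eq0 -lt0n (leq_trans _ q_ge2) ?implybT.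
by rewrite natrM powRM // q_pow; lra.
Qed.

Let bound_step n : (1 < n)%N ->
    (forall d, (0 < d < n)%N -> `|g d| <= d%:R `^ (gamma + s)) ->
  `|g n| <= n%:R `^ (gamma + s).
Proof.
move=> n_gt1 IH; have n_gt0 := ltnW n_gt1.
rewrite (dirichlet_inverse_rec f1 fg n_gt1) normrN.
apply: le_trans (ler_norm_sum _ _ _) _.
apply: le_trans (_ : \sum_(d <- divisors n | d != n)
    C * n%:R `^ (gamma + s) * (n %/ d)%N%:R `^ (- s) <= _).
  rewrite big_seq_cond [leRHS]big_seq_cond; apply: ler_sum => d /andP[d_div d_neq_n].
  rewrite -dvdn_divisors // in d_div.
  have d_lt_n : (d < n)%N by rewrite ltn_neqAle d_neq_n dvdn_leq.
  by apply: term_le => //; apply: IH; rewrite d_lt_n (dvdn_gt0 n_gt0 d_div).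
rewrite -mulr_sumr.
apply: le_trans (ler_wpM2l _ (sum_proper_divisors_le n_gt0)) _.
  by rewrite mulr_ge0 ?powR_ge0 ?ltW.
by rewrite mulrAC mulfV ?gt_eqF // mul1r.
Qed.

Lemma dirichlet_inverse_powR_bound n : (0 < n)%N ->
  `|g n| <= n%:R `^ (gamma + s).
Proof.
elim/ltn_ind: n => n IH n_gt0.
case: (ltnP 1 n) => [n_gt1 | n_le1].
  by apply: bound_step => // d /andP[d_gt0 d_lt_n]; exact: IH.
have -> : n = 1%N by apply/eqP; rewrite eqn_leq n_le1.
by rewrite (dirichlet_inverse1 f1 fg) powR1 normr1.
Qed.

End DirichletInverseBound.

Theorem proposition3p10 (R : realType) (f finv : nat -> R) (C gamma varsigma : R) :
  f 1%N = 1 ->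
  0 < C ->
  (forall n : nat, (2 <= n)%N -> `|f n| <= C * (n%:R `^ gamma)) ->
  is_dirichlet_inverse f finv ->
  1 < varsigma ->
  zeta varsigma = C^-1 + 1 ->
  forall n : nat, (2 <= n)%N -> `|finv n| <= n%:R `^ (gamma + varsigma).
Proof.
move=> f1 C_gt0 f_bound fg varsigma_gt1 zeta_varsigma n n_ge2.
apply: (dirichlet_inverse_powR_bound f1 C_gt0 f_bound fg) => [N|]; last exact: ltnW.
by rewrite -zeta_varsigma sum_powRN_le_zeta.
Qed.
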